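(* Fix an integer blocklength $m\ge 1$, a message size $N_c>0$ (bits), an information leakage level $\delta\in(0,1/2)$, and set $\mu=Q^{-1}(\delta)$, where $Q(y)=\frac{1}{\sqrt{2\pi}}\int_y^\infty e^{-t^2/2}\,dt$. Let $V(y)=(\log_2 e)^2\left(1-(1+y)^{-2}\right)$ for $y\ge 0$. Fix constants $a_C\in(0,1)$, $\varrho_E^2\ge 0$, $P>0$, $\sigma^2>0$, and $G_E>0$ (the path-loss factor $G_E=(d_{SR_2}d_{R_2E})^{-\alpha}$). For $x\ge 0$ (representing the squared optimal eavesdropper channel amplitude $|\gamma_O^{(E)}|^2$) define $$\gamma_{E,C}(x)=\frac{a_C P G_E\, x}{\varrho_E^2 P G_E\, x+\sigma^2},\qquad \tilde\beta(x)=(1+\gamma_{E,C}(x))\exp\!\left(\left(\frac{\mu V^{1/2}(\gamma_{E,C}(x))}{\sqrt m}+\frac{N_c}{m}\right)\ln 2\right)-1.$$ Then $\tilde\beta$ is a monotonically increasing function of $x=|\gamma_O^{(E)}|^2$ on $[0,\infty)$.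
   Context: $\tilde\beta$ is the security threshold of the finite-blocklength secure block error rate approximation; $\gamma_{E,C}$ is the SNR at an eavesdropper (with hardware impairment level $\varrho_E^2$) for decoding the central user's message after ideal removal of its own signal. *)

From Stdlib Require Import Reals.
From Coquelicot Require Import Coquelicot.
Open Scope R_scope.

Definition Qfun (y : R) : R :=
  / sqrt (2 * PI) *
  RInt_gen (fun t : R => exp (- t ^ 2 / 2)) (at_point y) (Rbar_locally p_infty).

Definition log2e : R := / ln 2.
Definition Vdisp (y : R) : R := log2e ^ 2 * (1 - / (1 + y) ^ 2).

Definition gammaEC (aC rhoE2 P sigma2 GE x : R) : R :=
  aC * P * GE * x / (rhoE2 * P * GE * x + sigma2).

Definition beta_tilde (m : nat) (Nc mu aC rhoE2 P sigma2 GE x : R) : R :=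
  let g := gammaEC aC rhoE2 P sigma2 GE x in
  (1 + g) * exp ((mu * sqrt (Vdisp g) / sqrt (INR m) + Nc / INR m) * ln 2) - 1.

(* γ_{E,C} is a linear-fractional function of x whose determinant a_C P G_E σ² is
   positive, so it increases strictly.  β̃ = (1 + γ) exp(c(γ) ln 2) - 1, where the
   exponent c(γ) = μ V(γ)^{1/2} / √m + N_c / m is nondecreasing in γ provided μ ≥ 0,
   because V increases on [0, ∞).  The sign of μ comes from δ < 1/2 = Q(0): Q is
   nonincreasing, so μ ≤ 0 would give Q(μ) ≥ Q(0).  The value Q(0) = 1/2 is the
   Gaussian integral ∫_0^∞ e^{-t²} dt = √π / 2, proved in MathComp-Analysis for the
   Lebesgue integral and its own π, and transferred here to Coquelicot's Riemann
   integral and Stdlib's PI. *)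

From Stdlib Require Import Reals Lra.
From Coquelicot Require Import Coquelicot.
Open Scope R_scope.

Definition gauss_RInt (b : R) : R := RInt (fun t => exp (- t ^ 2)) 0 b.

Lemma continuous_gauss (t : R) : continuous (fun t => exp (- t ^ 2)) t.
Proof. apply (@ex_derive_continuous R_AbsRing R_NormedModule); auto_derive; auto. Qed.

Lemma derivable_pt_lim_gauss_RInt (x : R) :
  derivable_pt_lim gauss_RInt x (exp (- x ^ 2)).
Proof.
apply is_derive_Reals.
apply (@is_derive_RInt R_NormedModule (fun t => exp (- t ^ 2)) gauss_RInt 0).
- exists (mkposreal 1 Rlt_0_1); intros y _.
  apply (@RInt_correct R_CompleteNormedModule), ex_RInt_continuous.
  intros z _; apply continuous_gauss.
- apply continuous_gauss.
Qed.

From mathcomp Require all_boot all_algebra.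
From mathcomp Require all_reals all_analysis Rstruct Rstruct_topology.

Module GaussTransfer.
Import all_boot all_algebra all_reals all_analysis.
Import Rstruct Rstruct_topology numFieldNormedType.Exports.
Import GRing.Theory Num.Theory.
Local Open Scope classical_set_scope.
Local Open Scope ring_scope.
(* The cast selects the [realType] instance of Stdlib's [R]. *)
Local Notation RT := (R : realType).

Lemma R2E : IZR 2 = 2%R.
Proof. by rewrite IZRposE INRE. Qed.

(* By comparing the defining power series, as for [RexpE]. *)
Lemma RcosE (x : R) : Rtrigo_def.cos x = trigo.cos x.
Proof.
rewrite /Rtrigo_def.cos; case: exist_cos => y.
rewrite /cos_in /infinite_sum => cos_ub.
suff cvg_y : series (cos_coeff' x) @ \oo --> y.
  exact: cvg_unique _ cvg_y (@cvg_cos_coeff' _ x).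
rewrite -cvg_shiftS /=; apply/(@cvgrPdist_lt _ R^o) => e /RltP /cos_ub[N Ncos_ub].
near=> n.
have nN : (n >= N)%coq_nat by apply/ssrnat.leP; near: n; exact: nbhs_infty_ge.
move: Ncos_ub => /(_ _ nN) /[!RdistE] /RltP /=.
rewrite distrC sum_f_R0E; congr (`| _ - _ | < e).
apply: eq_bigr => k _; rewrite /cos_n /cos_coeff' /Rdiv RinvE !RpowE factE INRE /Rsqr.
have -> : (x * x)%coqR = x ^+ 2 by rewrite expr2.
by rewrite -mul2n -exprM [RHS]mulrAC.
Unshelve. all: by end_near. Qed.

(* Both halves are the unique zero of the cosine in [0, 2]. *)
Lemma RPIE : PI = pi.
Proof.
suff half : PI / 2 = pi / 2 by rewrite -[LHS](@divfK _ 2) // half divfK.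
have [pi_half_02 cos_pi_half] := @pihalf_02_cos_pihalf R.
apply: cos_02_uniq => //; last by rewrite -RdivE -RcosE cos_PI2.
have := PI_RGT_0; have := PI_4 => PI_le4 PI_gt0.
by apply/andP; split; apply/RleP; rewrite -?R0E -RdivE -R2E; lra.
Qed.

Lemma is_derive_of_derivable_pt_lim (f : RT -> RT) (x l : RT) :
  derivable_pt_lim f x l -> is_derive x 1 f l.
Proof.
move=> f_lim.
have f_cvg : (fun h : RT => h^-1 *: ((f \o shift x) (h *: 1) - f x)) @ 0^' --> l.
  apply/cvgrPdist_lt => e /RltP e_gt0.
  have [d d_lim] := f_lim e e_gt0.
  exists (pos d) => /=; first by apply/RltP; apply: cond_pos.
  move=> h /= h_d /eqP h_neq0.
  have h_lt_d : (Rabs h < d)%coqR by apply/RltP; rewrite RabsE; rewrite sub0r normrN in h_d.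
  move: (d_lim h h_neq0 h_lt_d) => /RltP; rewrite RabsE distrC.
  suff -> : h^-1 *: (f (h%:A + x) - f x) = ((f (x + h) - f x) / h)%coqR by [].
  change (h^-1 * (f (h * 1 + x) - f x) = (f (x + h) - f x) * h^-1).
  by rewrite mulr1 [h + x]addrC mulrC.
by apply: DeriveDef; [apply/cvg_ex; exists l | exact: cvg_lim].
Qed.

Lemma is_derive_gauss_RInt (x : RT) : is_derive x 1 (gauss_RInt : RT -> RT) (gauss_fun x).
Proof.
rewrite /gauss_fun -RpowE -RexpE.
exact/is_derive_of_derivable_pt_lim/derivable_pt_lim_gauss_RInt.
Qed.

Lemma integral0_gauss_RInt (b : RT) :
  0 < b -> gauss_integral_proof.integral0_gauss b = gauss_RInt b.
Proof.
move=> b_gt0; have cont (x : RT) : {for x, continuous (gauss_RInt : RT -> RT)}.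
  apply/continuity_pt_cvg/derivable_continuous_pt.
  exact: exist _ _ (derivable_pt_lim_gauss_RInt x).
rewrite /gauss_integral_proof.integral0_gauss /Rintegral.
rewrite (@continuous_FTC2 _ _ (gauss_RInt : RT -> RT)) //=.
- by rewrite /gauss_RInt RInt_point subr0.
- exact/continuous_subspaceT/continuous_gauss_fun.
- split; [by move=> x _; have [] := is_derive_gauss_RInt x | |].
  + exact/cvg_at_right_filter/cont.
  + exact/cvg_at_left_filter/cont.
- by move=> x _; rewrite derive1E; have [] := is_derive_gauss_RInt x.
Qed.

Lemma cvg_gauss_RInt : (gauss_RInt : RT -> RT) b @[b --> +oo] --> Num.sqrt pi / 2.
Proof.
have eq_near : \forall b \near +oo, gauss_integral_proof.integral0_gauss b = gauss_RInt b.
  by near do apply: integral0_gauss_RInt; exact: nbhs_pinfty_gt.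
have sqr_cvg : (gauss_RInt : RT -> RT) b ^+ 2 @[b --> +oo] --> pi / 4.
  apply: cvg_trans gauss_integral_proof.cvg_integral0_gauss_sqr.
  by apply: near_eq_cvg; near=> b; rewrite (near eq_near b).
have -> : Num.sqrt pi / 2 = Num.sqrt (pi / 4) :> RT.
  rewrite sqrtrM ?pi_ge0 // sqrtrV // (_ : 4 = 2 ^+ 2) ?sqrtr_sqr ?ger0_norm //.
  by rewrite expr2 -natrM.
apply: cvg_trans (continuous_cvg _ _ sqr_cvg); last exact: sqrt_continuous.
apply: near_eq_cvg; near=> b.
have gauss_ge0 : 0 <= gauss_RInt b.
  by rewrite -(near eq_near b); have := @gauss_integral_proof.integral0_gauss_ge0 _ b.
by rewrite /= (sqrtr_sqr (gauss_RInt b : RT)) ger0_norm.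
Unshelve. all: by end_near. Qed.

Lemma is_lim_of_cvg_pinfty (f : RT -> RT) (l : RT) :
  f x @[x --> +oo] --> l -> is_lim f p_infty l.
Proof.
move=> /cvgrPdist_lt f_cvg; apply/is_lim_spec => eps.
have /f_cvg[M [_ M_near]] : 0 < pos eps by apply/RltP; exact: cond_pos.
by exists M => x /RltP /M_near /RltP; rewrite RabsE distrC.
Qed.

Lemma is_lim_gauss_RInt : is_lim gauss_RInt p_infty (sqrt PI / 2)%coqR.
Proof.
by rewrite RsqrtE RPIE RdivE R2E; apply/is_lim_of_cvg_pinfty/cvg_gauss_RInt.
Qed.

End GaussTransfer.

Lemma is_RInt_gen_of_is_lim (f : R -> R) (a l : R) :
  (forall b, ex_RInt f a b) -> is_lim (fun b => RInt f a b) p_infty l ->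
  is_RInt_gen f (at_point a) (Rbar_locally p_infty) l.
Proof.
intros f_int F_lim P P_l.
apply (Filter_prod _ _ _ (fun x => x = a) (fun b => P (RInt f a b))).
- reflexivity.
- exact (F_lim P P_l).
- intros x b -> Pb; exists (RInt f a b).
  split; [apply (@RInt_correct R_CompleteNormedModule), f_int | exact Pb].
Qed.

Lemma ex_RInt_gauss_half (a b : R) : ex_RInt (fun t => exp (- t ^ 2 / 2)) a b.
Proof.
apply (@ex_RInt_continuous R_CompleteNormedModule); intros.
apply (@ex_derive_continuous R_AbsRing R_NormedModule); auto_derive; auto.
Qed.

Lemma RInt_gauss_half (c : R) :
  RInt (fun t => exp (- t ^ 2 / 2)) 0 c = sqrt 2 * gauss_RInt (c / sqrt 2).
Proof.
assert (sqrt2_gt0 : 0 < sqrt 2) by (apply sqrt_lt_R0; lra).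
assert (ex_gauss : forall a b, ex_RInt (fun t => exp (- t ^ 2)) a b).
{ intros; apply (@ex_RInt_continuous R_CompleteNormedModule).
  intros; apply continuous_gauss. }
assert (subst := RInt_comp_lin (fun t => exp (- t ^ 2)) (/ sqrt 2) 0 0 c (ex_gauss _ _)).
rewrite Rmult_0_r, !Rplus_0_r, Rmult_comm in subst.
unfold gauss_RInt, Rdiv; rewrite <- subst, RInt_scal.
- unfold scal; simpl; unfold mult; simpl.
  rewrite <- Rmult_assoc, Rinv_r, Rmult_1_l by lra.
  apply RInt_ext; intros t _.
  rewrite Rplus_0_r; f_equal; field_simplify; [rewrite pow2_sqrt|]; lra.
- apply (@ex_RInt_continuous R_CompleteNormedModule); intros.
  apply (@ex_derive_continuous R_AbsRing R_NormedModule); auto_derive; auto.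
Qed.

Lemma is_lim_RInt_gauss_half :
  is_lim (fun c => RInt (fun t => exp (- t ^ 2 / 2)) 0 c) p_infty (sqrt (2 * PI) / 2).
Proof.
assert (sqrt2_gt0 : 0 < sqrt 2) by (apply sqrt_lt_R0; lra).
apply (is_lim_ext (fun c => sqrt 2 * gauss_RInt (c / sqrt 2))).
{ intros c; symmetry; apply RInt_gauss_half. }
replace (sqrt (2 * PI) / 2) with (sqrt 2 * (sqrt PI / 2))
  by (rewrite sqrt_mult by (pose proof PI_RGT_0; lra); field).
apply (is_lim_scal_l _ _ _ (sqrt PI / 2)), (is_lim_comp _ _ _ _ p_infty).
- apply GaussTransfer.is_lim_gauss_RInt.
- apply is_lim_spec; intros M; exists (M * sqrt 2); intros c Mc.
  apply Rmult_lt_reg_r with (sqrt 2); [lra|].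
  unfold Rdiv; rewrite Rmult_assoc, Rinv_l; lra.
- exists 0; discriminate.
Qed.

Lemma Qfun_ge_half (mu : R) : mu <= 0 -> 1 / 2 <= Qfun mu.
Proof.
intros mu_le0.
assert (head : is_RInt_gen (fun t => exp (- t ^ 2 / 2)) (at_point mu) (at_point 0)
                 (RInt (fun t => exp (- t ^ 2 / 2)) mu 0))
  by apply is_RInt_gen_at_point, (@RInt_correct R_CompleteNormedModule), ex_RInt_gauss_half.
assert (tail := is_RInt_gen_of_is_lim _ 0 _ (ex_RInt_gauss_half 0) is_lim_RInt_gauss_half).
assert (head_ge0 : 0 <= RInt (fun t => exp (- t ^ 2 / 2)) mu 0)
  by (apply RInt_ge_0; [lra | apply ex_RInt_gauss_half | intros; left; apply exp_pos]).
assert (sqrt_gt0 : 0 < sqrt (2 * PI)) by (apply sqrt_lt_R0; pose proof PI_RGT_0; lra).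
unfold Qfun; rewrite (is_RInt_gen_unique _ _ (is_RInt_gen_Chasles _ _ _ _ head tail)).
change (plus ?a ?b) with (a + b).
apply Rmult_le_reg_l with (sqrt (2 * PI)); [lra|].
rewrite <- Rmult_assoc, Rinv_r; lra.
Qed.

Lemma gammaEC_ge0 (aC rhoE2 P sigma2 GE x : R) :
  0 <= aC -> 0 <= rhoE2 -> 0 <= P -> 0 < sigma2 -> 0 <= GE -> 0 <= x ->
  0 <= gammaEC aC rhoE2 P sigma2 GE x.
Proof.
intros; unfold gammaEC, Rdiv.
apply Rmult_le_pos; [|apply Rlt_le, Rinv_0_lt_compat];
  repeat (apply Rmult_le_pos || apply Rplus_le_lt_0_compat); auto.
Qed.

Lemma gammaEC_increasing (aC rhoE2 P sigma2 GE x y : R) :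
  0 < aC -> 0 <= rhoE2 -> 0 < P -> 0 < sigma2 -> 0 < GE -> 0 <= x -> x < y ->
  gammaEC aC rhoE2 P sigma2 GE x < gammaEC aC rhoE2 P sigma2 GE y.
Proof.
intros aC_gt0 rhoE2_ge0 P_gt0 sigma2_gt0 GE_gt0 x_ge0 xy.
assert (B_ge0 : 0 <= rhoE2 * P * GE) by (apply Rmult_le_pos; [apply Rmult_le_pos|]; lra).
assert (den_pos : forall z, 0 <= z -> 0 < rhoE2 * P * GE * z + sigma2)
  by (intros z z_ge0; pose proof (Rmult_le_pos _ _ B_ge0 z_ge0); lra).
apply Rlt_0_minus.
replace (gammaEC aC rhoE2 P sigma2 GE y - gammaEC aC rhoE2 P sigma2 GE x) with
  (aC * P * GE * sigma2 * (y - x) /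
   ((rhoE2 * P * GE * x + sigma2) * (rhoE2 * P * GE * y + sigma2)))
  by (unfold gammaEC; field; split; apply Rgt_not_eq, den_pos; lra).
apply Rdiv_lt_0_compat; [|apply Rmult_lt_0_compat; apply den_pos; lra].
repeat apply Rmult_lt_0_compat; lra.
Qed.

Lemma Vdisp_le (g h : R) : 0 <= g -> g <= h -> Vdisp g <= Vdisp h.
Proof.
intros g_ge0 gh; unfold Vdisp.
apply Rmult_le_compat_l; [apply pow2_ge_0|].
enough (/ (1 + h) ^ 2 <= / (1 + g) ^ 2) by lra.
apply Rinv_le_contravar; [apply pow_lt | apply pow_incr]; lra.
Qed.

Lemma exp_le_compat (x y : R) : x <= y -> exp x <= exp y.
Proof.
intros [lt | ->]; [apply Rlt_le, exp_increasing, lt | apply Rle_refl].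
Qed.

Definition beta_of_snr (m : nat) (Nc mu g : R) : R :=
  (1 + g) * exp ((mu * sqrt (Vdisp g) / sqrt (INR m) + Nc / INR m) * ln 2) - 1.

Lemma beta_tilde_of_snr (m : nat) (Nc mu aC rhoE2 P sigma2 GE x : R) :
  beta_tilde m Nc mu aC rhoE2 P sigma2 GE x =
  beta_of_snr m Nc mu (gammaEC aC rhoE2 P sigma2 GE x).
Proof. reflexivity. Qed.

(* No hypothesis on [m] is needed: for [m = 0] the divisions by [INR m] and
   [sqrt (INR m)] return [0] and the exponential factor is constant. *)
Lemma beta_of_snr_increasing (m : nat) (Nc mu g h : R) :
  0 <= mu -> 0 <= g -> g < h -> beta_of_snr m Nc mu g < beta_of_snr m Nc mu h.
Proof.
intros mu_ge0 g_ge0 gh.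
set (E z := exp ((mu * sqrt (Vdisp z) / sqrt (INR m) + Nc / INR m) * ln 2)).
unfold beta_of_snr; fold (E g) (E h).
assert (E_le : E g <= E h).
{ unfold E; apply exp_le_compat, Rmult_le_compat_r; [pose proof ln_lt_2; lra|].
  apply Rplus_le_compat_r, Rmult_le_compat_r; [rewrite <- sqrt_inv; apply sqrt_pos|].
  apply Rmult_le_compat_l, sqrt_le_1_alt, Vdisp_le; lra. }
assert (E_gt0 : 0 < E g) by apply exp_pos.
assert (snr_step : (1 + g) * E g < (1 + h) * E g) by (apply Rmult_lt_compat_r; lra).
assert (exp_step : (1 + h) * E g <= (1 + h) * E h) by (apply Rmult_le_compat_l; lra).
lra.
Qed.

Lemma Qfun_lt_half_pos (mu : R) : Qfun mu < 1 / 2 -> 0 < mu.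
Proof.
intros Q_lt; destruct (Rle_or_lt mu 0) as [mu_le0 | mu_gt0]; [|exact mu_gt0].
pose proof (Qfun_ge_half mu mu_le0); lra.
Qed.

Theorem proposition1 (m : nat) (Nc delta mu aC rhoE2 P sigma2 GE : R) :
  (1 <= m)%nat -> 0 < Nc -> 0 < delta < 1 / 2 -> Qfun mu = delta ->
  0 < aC < 1 -> 0 <= rhoE2 -> 0 < P -> 0 < sigma2 -> 0 < GE ->
  forall x y : R, 0 <= x -> x < y ->
    beta_tilde m Nc mu aC rhoE2 P sigma2 GE x <
    beta_tilde m Nc mu aC rhoE2 P sigma2 GE y.
Proof.
intros _ _ delta_bounds Q_mu aC_bounds rhoE2_ge0 P_gt0 sigma2_gt0 GE_gt0 x y x_ge0 xy.
assert (mu_gt0 : 0 < mu) by (apply Qfun_lt_half_pos; lra).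
rewrite !beta_tilde_of_snr.
apply beta_of_snr_increasing; [lra | apply gammaEC_ge0 | apply gammaEC_increasing]; lra.
Qed.
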